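(* Let $n\ge 2$. Every equilibrium graph $G$ of $(1,1,\dots,1)$-BG (all $n$ budgets equal to $1$) in the SUM version has connected underlying graph $U(G)$, $U(G)$ has a unique cycle, this cycle has at most $5$ vertices, and every vertex is either on the cycle or adjacent in $U(G)$ to a vertex of the cycle.
   Context: Bounded budget network creation game $(b_1,\dots,b_n)$-BG: $n$ players with integer budgets $0\le b_i\le n-1$. A strategy of player $i$ is a set $S_i\subseteq\{1,\dots,n\}\setminus\{i\}$ with $|S_i|=b_i$; a profile is realized by the directed graph $G$ on $u_1,\dots,u_n$ with an arc $\overrightarrow{u_iu_j}$ iff $j\in S_i$. $U(G)$ is the undirected multigraph obtained by ignoring directions; if both $\overrightarrow{uv}$ and $\overrightarrow{vu}$ are arcs (a brace), $uv$ is a double edge of $U(G)$, regarded as a cycle with 2 vertices. $\operatorname{dist}(u,v)$ is the distance in $U(G)$, defined as $n^2$ between different components. SUM cost: $c_{SUM}(u)=\sum_v\operatorname{dist}(u,v)$. An equilibrium graph in the SUM version is a realization in which no vertex can decrease its SUM cost by changing its own strategy while the others are fixed. *)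

(* (1,...,1)-BG: each player i buys exactly one arc i -> f i. *)
From mathcomp Require Import all_boot.
Set Implicit Arguments. Unset Strict Implicit. Unset Printing Implicit Defensive.

Section BG.
Variable n : nat.
Implicit Types (f : 'I_n -> 'I_n) (u v w i j : 'I_n).

Definition valid_profile f := forall i, f i != i.

Definition adjU f : rel 'I_n := fun u v => (f u == v) || (f v == u).

Fixpoint reachU f (k : nat) u v : bool :=
  if k is k'.+1 then reachU f k' u v || [exists w, reachU f k' u w && adjU f w v]
  else u == v.

(* distance in U(G): least k with v reachable within k steps (every finite
   distance is < n), and n^2 between different components. *)
Definition distU f u v : nat :=
  let k := find (fun k => reachU f k u v) (iota 0 n) in
  if k < n then k else n ^ 2.

Definition cost_sum f u : nat := \sum_(v : 'I_n) distU f u v.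

Definition deviate f i j : 'I_n -> 'I_n := fun x => if x == i then j else f x.

Definition equilibrium_sum f :=
  forall i j, j != i -> cost_sum f i <= cost_sum (deviate f i j) i.

Definition connectedU f := forall u v, connect (adjU f) u v.

(* Edges of U(G) are indexed by their owner i : edge {i, f i}.
   A cycle of the multigraph U(G) is a nonempty set C of edges forming a
   connected 2-regular subgraph (a brace gives a 2-cycle). *)
Definition cverts f (C : {set 'I_n}) : {set 'I_n} :=
  [set v | [exists i in C, (i == v) || (f i == v)]].

Definition cdeg f (C : {set 'I_n}) v : nat :=
  #|[set i in C | i == v]| + #|[set i in C | f i == v]|.

Definition cadj f (C : {set 'I_n}) : rel 'I_n := fun x y =>
  [exists i in C, ((i == x) && (f i == y)) || ((i == y) && (f i == x))].

Definition is_cycle f (C : {set 'I_n}) : bool :=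
  [&& C != set0,
      [forall v in cverts f C, cdeg f C v == 2] &
      [forall x in cverts f C, forall y in cverts f C, connect (cadj f C) x y]].

End BG.

From mathcomp Require Import all_boot zify.
Set Implicit Arguments. Unset Strict Implicit. Unset Printing Implicit Defensive.

(* The arcs u -> f u form a functional graph, so each component of U(G) contains exactly
   one cycle, made of the periodic vertices.
   If U(G) were disconnected, a cycle vertex could rewire its arc into another component
   without disconnecting its own, trading n^2 terms for distances below n.
   If some vertex were at depth 2, pick a non-periodic u with a child v and f u on the
   cycle, and let T u be the subtree hanging at u: v rewiring to f u gets closer to
   everything outside T u, which forces |T u| > n/2, while the cycle predecessor of f u
   rewiring to u gets closer to everything inside T u, which forces |T u| < n/2.
   So every vertex is within distance 1 of the cycle.  If the cycle had length L >= 6,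
   a cycle vertex c rewiring to its second successor shows that the numbers w(k) of
   vertices hanging at the k-th successor of c satisfy w(2) + w(3) <= w(1); shifting c
   around the cycle, the positive weights would decrease strictly forever. *)

Section Distance.
Variables (n : nat) (f : 'I_n -> 'I_n).
Local Notation adj := (adjU f).
Local Notation reach := (reachU f).
Local Notation d := (distU f).

Lemma adjU_sym : symmetric adj.
Proof. by move=> x y; rewrite /adjU orbC. Qed.

Lemma reachU_mono k m u v : k <= m -> reach k u v -> reach m u v.
Proof. by move=> /subnK <-; elim: (m - k) => //= i IH r; rewrite IH. Qed.

Lemma reachU_step k u w v : reach k u w -> adj w v -> reach k.+1 u v.
Proof. by move=> r a /=; apply/orP; right; apply/existsP; exists w; rewrite r. Qed.

Lemma reachUS k u v : reach k.+1 u v -> reach k u v \/ exists2 w, reach k u w & adj w v.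
Proof. by move=> /= /orP [r|/existsP [w /andP [r a]]]; [left | right; exists w]. Qed.

Lemma reachU_cons k u w v : adj u w -> reach k w v -> reach k.+1 u v.
Proof.
move=> a; elim: k v => [|k IH] v.
  by move=> /eqP <-; apply: (@reachU_step 0 u u) => //=.
case/reachUS => [r|[w' r a']]; first exact: reachU_mono (IH _ r).
exact: reachU_step (IH _ r) a'.
Qed.

Lemma reachU_connect k u v : reach k u v -> connect adj u v.
Proof.
elim: k v => [|k IH] v; first by move/eqP ->.
case/reachUS => [/IH //|[w /IH r a]].
exact: connect_trans r (connect1 a).
Qed.

Lemma reachU_path u p : path adj u p -> reach (size p) u (last u p).
Proof.
elim: p u => [|w p IH] u /=; first by rewrite eqxx.
by case/andP => a /IH; apply: reachU_cons a.
Qed.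

Lemma connect_reachU u v : connect adj u v -> reach n.-1 u v.
Proof.
case/connectP => p /shortenP [p' p'_path p'_uniq _] ->.
apply: reachU_mono (reachU_path p'_path).
have := max_card (mem (u :: p')); rewrite card_ord (card_uniqP p'_uniq) /=; lia.
Qed.

Lemma distU_find u v : connect adj u v ->
  d u v = find (fun k => reach k u v) (iota 0 n) /\ d u v < n.
Proof.
move=> uv; have n_gt0 : 0 < n := leq_ltn_trans (leq0n u) (ltn_ord u).
have : has (fun k => reach k u v) (iota 0 n).
  by apply/hasP; exists n.-1; [rewrite mem_iota; lia | exact: connect_reachU].
by rewrite has_find size_iota /distU /= => lt_find; rewrite lt_find.
Qed.

Lemma distU_reachU u v : connect adj u v -> reach (d u v) u v /\ d u v < n.
Proof.
move=> uv; have [E lt_dn] := distU_find uv; split => //.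
have has_reach : has (fun k => reach k u v) (iota 0 n) by rewrite has_find size_iota -E.
by have := nth_find 0 has_reach; rewrite -E nth_iota // add0n.
Qed.

Lemma distU_le k u v : reach k u v -> d u v <= k.
Proof.
move=> r; have [E lt_dn] := distU_find (reachU_connect r).
rewrite leqNgt; apply/negP => lt_kd.
have lt_kfind : k < find (fun k => reach k u v) (iota 0 n) by rewrite -E.
by have := before_find 0 lt_kfind; rewrite nth_iota ?add0n ?r //; lia.
Qed.

Lemma distU_disconnected u v : ~~ connect adj u v -> d u v = n ^ 2.
Proof.
move=> Nuv; rewrite /distU /=; case: ifP => // lt_find.
have has_reach : has (fun k => reach k u v) (iota 0 n) by rewrite has_find size_iota.
have := nth_find 0 has_reach; rewrite nth_iota // add0n => /reachU_connect uv.
by rewrite uv in Nuv.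
Qed.

Lemma distUxx u : d u u = 0.
Proof. by apply/eqP; rewrite -leqn0; apply: (@distU_le 0); rewrite /= eqxx. Qed.

Lemma distU_eq0 u v : connect adj u v -> d u v = 0 -> u = v.
Proof. by case/distU_reachU => r _ E; rewrite E in r; apply/eqP. Qed.

Lemma distU_adj u x y : connect adj u x -> adj x y -> d u y <= (d u x).+1.
Proof. by case/distU_reachU => r _ a; apply: distU_le (reachU_step r a). Qed.

Lemma distU_descent u x : connect adj u x -> x != u ->
  exists2 y, adj x y & d u y < d u x.
Proof.
move=> ux neq_xu; have [+ _] := distU_reachU ux.
case E: (d u x) => [|k]; first by move=> /eqP eq_ux; rewrite eq_ux eqxx in neq_xu.
case/reachUS => [/distU_le le_dk|[w /distU_le le_dw a]]; first by exfalso; lia.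
by exists w; [rewrite adjU_sym | lia].
Qed.

Lemma lipschitz_le_distU (g : 'I_n -> nat) s x :
  (forall a b, adj a b -> g b <= (g a).+1) -> connect adj s x -> g x <= g s + d s x.
Proof.
move=> g_lip /distU_reachU [+ _].
suff le_g k y : reach k s y -> g y <= g s + k by apply: le_g.
elim: k y => [|k IH] y; first by move=> /eqP ->; rewrite addn0.
by case/reachUS => [/IH|[w /IH le_gw /g_lip]]; lia.
Qed.

Lemma distU_le_descent (g : 'I_n -> nat) s x :
  (forall a, a != s -> exists2 b, adj a b & g b < g a) -> d s x <= g x.
Proof.
move=> g_desc; apply: distU_le.
suff reach_g m y : g y <= m -> reach (g y) s y by exact: reach_g.
elim: m y => [|m IH] y le_gy; have [->|/g_desc [b a lt_gb]] := eqVneq y s.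
- exact: reachU_mono (leq0n _) (eqxx s : reach 0 s s).
- lia.
- exact: reachU_mono (leq0n _) (eqxx s : reach 0 s s).
- apply: reachU_mono (reachU_step (IH b _) _); [exact: lt_gb | lia | by rewrite adjU_sym].
Qed.

Hypothesis f_conn : connectedU f.

Lemma distU_triangle u w x : d u x <= d u w + d w x.
Proof. by apply: lipschitz_le_distU (f_conn w x) => a b; apply: distU_adj. Qed.

Definition sole_exit (S : {set 'I_n}) a b :=
  forall p q, adj p q -> p \in S -> q \notin S -> p = a /\ q = b.

Lemma distU_exit S a b s x : sole_exit S a b -> a \in S -> b \notin S ->
  s \in S -> x \notin S -> d s a + d b x < d s x.
Proof.
move=> exitS aS bNS sS xNS.
pose g y := if y \in S then d s y else (d s a + d b y).+1.
suff: g x <= g s + d s x by rewrite /g sS (negbTE xNS) distUxx.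
apply: lipschitz_le_distU (f_conn s x) => p q pq; rewrite /g.
case pS: (p \in S); case qS: (q \in S).
- exact: distU_adj (f_conn _ _) pq.
- by have [-> ->] := exitS _ _ pq pS (negbT qS); rewrite distUxx addn0.
- rewrite adjU_sym in pq; have [-> ->] := exitS _ _ pq qS (negbT pS).
  by rewrite distUxx; lia.
- have := distU_adj (f_conn b p) pq; lia.
Qed.

Lemma distU_entry S a b s x : sole_exit S a b -> a \in S -> b \notin S ->
  s \notin S -> x \in S -> d s b + d a x < d s x.
Proof.
move=> exitS aS bNS sNS xS; apply: (@distU_exit (~: S)); rewrite ?inE ?negbK //.
move=> p q pq; rewrite !inE negbK => pNS qS; rewrite adjU_sym in pq.
by case: (exitS _ _ pq qS pNS) => -> ->.
Qed.

End Distance.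

Section Sums.
Variable n : nat.
Implicit Types (f : 'I_n -> 'I_n) (g : 'I_n -> nat).

Lemma leq_sum_ord (F G : 'I_n -> nat) :
  (forall x, F x <= G x) -> \sum_(x : 'I_n) F x <= \sum_(x : 'I_n) G x.
Proof. by move=> le_FG; apply: leq_sum => x _. Qed.

Lemma sum_le_cost_sum f g s :
  (forall x, g x <= distU f s x) -> \sum_(x : 'I_n) g x <= cost_sum f s.
Proof. by move=> le_g; apply: leq_sum => x _. Qed.

Lemma cost_sum_le_sum f g s :
  (forall x, distU f s x <= g x) -> cost_sum f s <= \sum_(x : 'I_n) g x.
Proof. by move=> le_g; apply: leq_sum => x _. Qed.

Lemma sum_mem_card (S : {set 'I_n}) : \sum_(x : 'I_n) (x \in S : nat) = #|S|.
Proof. by rewrite -sum1_card [RHS]big_mkcond; apply: eq_bigr => x _; case: (x \in S). Qed.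

Lemma sum_delta (b : 'I_n) c : \sum_(x : 'I_n) (if x == b then c else 0) = c.
Proof. by rewrite (bigD1 b) //= eqxx big1 ?addn0 // => x /negbTE ->. Qed.

End Sums.

Section Periodic.
Variables (n : nat) (f : 'I_n -> 'I_n).

Definition periodic x := fconnect f (f x) x.

Lemma fconnectP x y : reflect (exists k, iter k f x = y) (fconnect f x y).
Proof.
apply: (iffP idP) => [xy|[k <-]]; last exact: fconnect_iter.
by exists (findex f x y); apply: iter_findex.
Qed.

Lemma periodicP x : reflect (exists k, iter k.+1 f x = x) (periodic x).
Proof. by apply: (iffP idP) => [/(orbitPcycle 2 3)|/(orbitPcycle 3 2)]. Qed.

Lemma periodic_f x : periodic x -> periodic (f x).
Proof. by case/periodicP => m fx; apply/periodicP; exists m; rewrite -iterSr iterS fx. Qed.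

Lemma periodic_iter k x : periodic x -> periodic (iter k f x).
Proof. by move=> px; elim: k => //= k; apply: periodic_f. Qed.

Lemma periodic_pred z : periodic z -> exists2 y, periodic y & f y = z.
Proof.
move=> pz; have /periodicP [m fz] := pz.
by exists (iter m f z); rewrite ?periodic_iter // -iterS.
Qed.

Lemma iter_order_periodic x : periodic x -> iter (order f x) f x = x.
Proof. by move/(orbitPcycle 2 4). Qed.

Lemma order_iter_periodic k x : periodic x -> order f (iter k f x) = order f x.
Proof.
move=> px; elim: k => //= k IH; rewrite -IH.
by move: (periodic_iter k px) => /(orbitPcycle 2 1).
Qed.

Lemma connect_iter x k : connect (adjU f) x (iter k f x).
Proof.
elim: k => //= k IH; apply: connect_trans IH (connect1 _).
by rewrite /adjU eqxx.
Qed.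

Lemma exists_periodic_iter x : exists k, periodic (iter k f x).
Proof.
have /trajectP [i lt_i fix_i] := looping_order f x.
exists i; apply/periodicP; exists (order f x - i).-1.
by rewrite prednK ?subn_gt0 // -iterD subnK ?fix_i // ltnW.
Qed.

Lemma connect_deviate_periodic i j x y : periodic i ->
  connect (adjU f) x y -> connect (adjU (deviate f i j)) x y.
Proof.
case/fconnectP => m fim; set g := deviate f i j.
have g_sym : connect_sym (adjU g) by apply/sym_connect_sym/adjU_sym.
have to_i k z : iter k f z = i -> connect (adjU g) z i.
  elim: k z => [|k IH] z; first by move=> /= ->.
  rewrite iterSr => fz; have [->//|neq_zi] := eqVneq z i.
  apply: connect_trans (connect1 _) (IH _ fz).
  by rewrite /adjU /g /deviate (negbTE neq_zi) eqxx.
apply: connect_sub => p q /orP [] /eqP fpq.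
  have [ep | neq_pi] := eqVneq p i; first by rewrite -fpq ep g_sym; apply: to_i fim.
  by apply: connect1; rewrite /adjU /g /deviate (negbTE neq_pi) fpq eqxx.
have [eq_qi | neq_qi] := eqVneq q i; first by rewrite -fpq eq_qi; apply: to_i fim.
by apply: connect1; rewrite /adjU /g /deviate (negbTE neq_qi) fpq eqxx orbT.
Qed.

End Periodic.

Theorem equilibrium_connected n (f : 'I_n -> 'I_n) :
  equilibrium_sum f -> connectedU f.
Proof.
move=> f_eq a b; apply/negPn/negP => Nab.
have [k pi] := exists_periodic_iter f a; set i := iter k f a in pi.
have Nib : ~~ connect (adjU f) i b.
  by apply: contra Nab; apply: connect_trans (connect_iter f a k).
have neq_bi : b != i by apply: contraNneq Nib => ->.
set g := deviate f i b.
have n_gt0 : 0 < n := leq_ltn_trans (leq0n a) (ltn_ord a).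
have lb : \sum_(x : 'I_n) (if connect (adjU f) i x then 0 else n ^ 2) <= cost_sum f i.
  by apply: sum_le_cost_sum => x; case: ifPn => // /distU_disconnected ->.
have ub : cost_sum g i <= \sum_(x : 'I_n) (if connect (adjU g) i x then n.-1 else n ^ 2).
  apply: cost_sum_le_sum => x.
  by case: ifPn => [/distU_reachU [_]|/distU_disconnected ->] //; lia.
have pointwise (x : 'I_n) :
    (if connect (adjU g) i x then n.-1 else n ^ 2) + (if x == b then n ^ 2 else 0)
    <= n.-1 + (if connect (adjU f) i x then 0 else n ^ 2).
  have [->|neq_xb] := eqVneq x b.
    rewrite (negbTE Nib) (_ : connect _ i b) //; apply: connect1.
    by rewrite /adjU /g /deviate !eqxx.
  case ix: (connect (adjU f) i x).
    by rewrite (connect_deviate_periodic b pi ix) addn0.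
  by case: ifP => _; lia.
have := leq_sum_ord pointwise.
rewrite !big_split /= sum_delta sum_nat_const card_ord => sum_le.
have := leq_trans sum_le (leq_add (leqnn _) (leq_trans lb (leq_trans (f_eq i b neq_bi) ub))).
rewrite addnC leq_add2r leqNgt => /negP; apply.
by rewrite expnS expn1 ltn_pmul2l // ltn_predL.
Qed.

Lemma fconnect_f_periodic n (f : 'I_n -> 'I_n) x c :
  periodic f c -> fconnect f (f x) c = fconnect f x c.
Proof. by move=> pc; rewrite [RHS]fconnect_eqVf; case: eqP => [->|//]; exact: pc. Qed.

Lemma periodic_of_inj_on n (f : 'I_n -> 'I_n) (C : {set 'I_n}) x :
  {in C, forall i, f i \in C} -> {in C &, injective f} -> x \in C -> periodic f x.
Proof.
move=> fC injC xC; apply/(orbitPcycle 5 2)/(sub_in2 _ injC) => y.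
by rewrite -fconnect_orbit => /fconnectP [k <-]; elim: k => //= k; apply: fC.
Qed.

Section Connected.
Variables (n : nat) (f : 'I_n -> 'I_n).
Hypothesis f_conn : connectedU f.

Lemma fconnect_periodic x c : periodic f c -> fconnect f x c.
Proof.
move=> pc; have cl : closed (adjU f) [pred y | fconnect f y c].
  by move=> a b /orP [] /eqP <-; rewrite !inE fconnect_f_periodic.
by have := closed_connect cl (f_conn c x); rewrite !inE connect0 => /esym.
Qed.

Lemma periodic_fconnect c y : periodic f c -> periodic f y -> fconnect f c y.
Proof.
move=> pc /periodicP [m fy]; have /fconnectP [k <-] := fconnect_periodic y pc.
by apply/fconnectP; exists (k * m); rewrite -iterD -mulnSr iterM; elim: k => //= k ->.
Qed.

Lemma periodic_f_inj a b : periodic f a -> periodic f b -> f a = f b -> a = b.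
Proof.
move=> pa pb fab; have /fconnectP [k eq_b] := periodic_fconnect pa pb.
case/periodicP: pa => p pa; rewrite -eq_b in fab *.
have fix_b : iter p.+1 f (iter k f a) = iter k f a by rewrite -iterD addnC iterD pa.
by rewrite -[LHS]pa -[RHS]fix_b !iterSr fab.
Qed.

Definition periodic_set := [set x | periodic f x].

Lemma cverts_periodic_set : cverts f periodic_set = periodic_set.
Proof.
apply/setP => v; rewrite !inE; apply/existsP/idP => [[i]|pv].
  by rewrite inE => /andP [pi /orP [] /eqP <-] //; apply: periodic_f.
by exists v; rewrite inE pv eqxx.
Qed.

Lemma card_periodic_set c : periodic f c -> #|periodic_set| = order f c.
Proof.
move=> pc; rewrite /order; apply: eq_card => x; rewrite inE.
by apply/idP/idP => [/(periodic_fconnect pc) // | /fconnectP [k <-]]; apply: periodic_iter.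
Qed.

Lemma card_owners (C : {set 'I_n}) v : #|[set i in C | i == v]| = (v \in C).
Proof.
rewrite (_ : [set i in C | i == v] = if v \in C then [set v] else set0).
  by case: (v \in C); rewrite ?cards1 ?cards0.
by apply/setP => i; case: ifP => vC; rewrite !inE; case: eqP => [->|_]; rewrite ?vC ?andbF.
Qed.

Lemma periodic_set_cycle : 0 < n -> is_cycle f periodic_set.
Proof.
move=> n_gt0; have [k pk] := exists_periodic_iter f (Ordinal n_gt0).
apply/and3P; split.
- by apply/set0Pn; exists (iter k f (Ordinal n_gt0)); rewrite inE.
- apply/forall_inP => v; rewrite cverts_periodic_set => vP.
  have [y py fy] : exists2 y, periodic f y & f y = v.
    by apply: periodic_pred; rewrite inE in vP.
  rewrite /cdeg card_owners vP (_ : [set i in _ | f i == v] = [set y]) ?cards1 //.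
  apply/setP => i; rewrite !inE; apply/andP/eqP => [[pi /eqP fi]|->]; last by rewrite py fy.
  by apply: periodic_f_inj; rewrite ?fi ?fy.
- apply/forall_inP => x; rewrite cverts_periodic_set inE => px.
  apply/forall_inP => y; rewrite inE => py.
  have /fconnectP [j <-] := periodic_fconnect px py.
  elim: j => // j IH; apply: connect_trans IH (connect1 _).
  by apply/existsP; exists (iter j f x); rewrite inE periodic_iter //= !eqxx.
Qed.

Lemma owner_in_cverts (C : {set 'I_n}) i : i \in C -> i \in cverts f C.
Proof. by move=> iC; rewrite inE; apply/existsP; exists i; rewrite iC eqxx. Qed.

Lemma head_in_cverts (C : {set 'I_n}) i : i \in C -> f i \in cverts f C.
Proof. by move=> iC; rewrite inE; apply/existsP; exists i; rewrite iC eqxx orbT. Qed.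

Lemma is_cycle_cverts C : is_cycle f C -> cverts f C = C.
Proof.
case/and3P => _ /forall_inP deg2 _; set V := cverts f C.
have sum_fibers (p : 'I_n -> 'I_n) : {in C, forall i, p i \in V} ->
    \sum_(v in V) #|[set i in C | p i == v]| = #|C|.
  move=> pV; rewrite -sum1_card (partition_big p (mem V) pV) /=.
  by apply: eq_bigr => v _; rewrite sum1dep_card.
have : \sum_(v in V) cdeg f C v = #|V| * 2.
  by rewrite -sum_nat_const; apply: eq_bigr => v /deg2 /eqP.
rewrite big_split /= (sum_fibers id) ?(sum_fibers f) => [deg_sum||]; last 2 first.
- exact: head_in_cverts.
- exact: owner_in_cverts.
apply/eqP; rewrite eq_sym eqEcard; apply/andP; split.
  by apply/subsetP; apply: owner_in_cverts.
by rewrite -(leq_pmul2r (isT : 0 < 2)) -deg_sum muln2 -addnn.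
Qed.

Lemma is_cycle_inj C : is_cycle f C -> {in C &, injective f}.
Proof.
move=> cycC i j iC jC fij; have VC := is_cycle_cverts cycC.
case/and3P: cycC => _ /forall_inP deg2 _.
have fiC : f i \in C by rewrite -VC head_in_cverts.
move: (deg2 _ (head_in_cverts iC)); rewrite /cdeg card_owners fiC add1n eqSS.
case/cards1P => w heads.
have : i \in [set k in C | f k == f i] by rewrite inE iC eqxx.
have : j \in [set k in C | f k == f i] by rewrite inE jC fij eqxx.
by rewrite heads !inE => /eqP -> /eqP ->.
Qed.

Lemma is_cycle_periodic_set C : is_cycle f C -> C = periodic_set.
Proof.
move=> cycC; have VC := is_cycle_cverts cycC.
have fC : {in C, forall i, f i \in C} by move=> i iC; rewrite -VC head_in_cverts.
have CP x : x \in C -> periodic f x := periodic_of_inj_on fC (is_cycle_inj cycC).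
apply/setP => z; rewrite inE; apply/idP/idP => [/CP // | pz].
case/and3P: cycC => /set0Pn [i iC] _ _.
have /fconnectP [k <-] := periodic_fconnect (CP _ iC) pz.
by elim: k => //= k; apply: fC.
Qed.

End Connected.

Lemma adjU_deviate n (f : 'I_n -> 'I_n) i j x y : adjU f x y ->
  (f x = y -> x != i) -> (f y = x -> y != i) -> adjU (deviate f i j) x y.
Proof.
rewrite /adjU /deviate => /orP [] /eqP fxy Nx Ny.
  by rewrite (negbTE (Nx fxy)) fxy eqxx.
by rewrite (negbTE (Ny fxy)) fxy eqxx orbT.
Qed.

Lemma adjU_deviate_new n (f : 'I_n -> 'I_n) i j : adjU (deviate f i j) j i.
Proof. by rewrite /adjU /deviate !eqxx orbT. Qed.

Section Subtree.
Variables (n : nat) (f : 'I_n -> 'I_n).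
Hypothesis f_conn : connectedU f.
Local Notation d := (distU f).

Definition subtree s := [set x | fconnect f x s].

Lemma subtree_self s : s \in subtree s.
Proof. by rewrite inE connect0. Qed.

Lemma mem_f_subtree s : (f s \in subtree s) = periodic f s.
Proof. by rewrite inE. Qed.

Lemma subtree_f v : {subset subtree v <= subtree (f v)}.
Proof. by move=> x; rewrite !inE => xv; apply: connect_trans xv (fconnect1 f v). Qed.

Lemma subtree_periodic s x : x \in subtree s -> periodic f x -> periodic f s.
Proof. by rewrite inE => /fconnectP [k <-]; apply: periodic_iter. Qed.

Lemma sole_exit_subtree s : ~~ periodic f s -> sole_exit f (subtree s) s (f s).
Proof.
move=> Nps p q /orP [] /eqP fpq; rewrite !inE => pS qNS.
  move: pS; rewrite fconnect_eqVf fpq (negbTE qNS) orbF => /eqP eq_ps.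
  by rewrite -fpq eq_ps.
by rewrite fconnect_eqVf fpq pS orbT in qNS.
Qed.

Lemma distU_gt0 x y : x != y -> 0 < d x y.
Proof.
by move=> neq_xy; rewrite lt0n; apply: contra neq_xy => /eqP/(distU_eq0 (f_conn x y)) ->.
Qed.

Lemma distU_f x : d (f x) x <= 1.
Proof.
have fx_x : adjU f (f x) x by rewrite /adjU eqxx orbT.
by have := distU_adj (f_conn (f x) (f x)) fx_x; rewrite distUxx.
Qed.

End Subtree.

Section Rewiring.
Variables (n : nat) (f : 'I_n -> 'I_n).
Hypothesis f_conn : connectedU f.
Local Notation d := (distU f).
Local Notation T := (subtree f).

Lemma cost_rewire_up v : ~~ periodic f (f v) ->
  cost_sum (deviate f v (f (f v))) v <=
  \sum_(z : 'I_n) (if z \in T v then d v z else (d (f (f v)) z).+1).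
Proof.
set u := f v; set r := f u => Npu.
have Npv : ~~ periodic f v := contra (@periodic_f _ f v) Npu.
have uNTv : u \notin T v by rewrite mem_f_subtree.
have rNTv : r \notin T v.
  by apply/negP => /subtree_f; rewrite mem_f_subtree (negbTE Npu).
have exit_v := sole_exit_subtree Npv.
pose phi z := if z \in T v then d v z else (d r z).+1.
apply: (@cost_sum_le_sum _ _ phi) => z; apply: (@distU_le_descent _ _ phi) => a neq_av.
rewrite /phi.
case aTv: (a \in T v).
  have [b ab lt_b] := distU_descent (f_conn v a) neq_av.
  have bTv : b \in T v.
    apply: contraT => bNTv; have [eq_av _] := exit_v _ _ ab aTv bNTv.
    by rewrite eq_av eqxx in neq_av.
  exists b; last by rewrite bTv.
  apply: (adjU_deviate _ ab) => [_ //|fba].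
  by apply: contraTneq aTv => eq_bv; rewrite -fba eq_bv.
have [-> | neq_ar] := eqVneq a r.
  by exists v; rewrite ?adjU_deviate_new // subtree_self distUxx.
have [b ab lt_b] := distU_descent (f_conn r a) neq_ar.
case bTv: (b \in T v).
  rewrite adjU_sym in ab; have [eq_bv eq_au] := exit_v _ _ ab bTv (negbT aTv).
  have entry := distU_entry f_conn exit_v (subtree_self f v) uNTv rNTv (subtree_self f v).
  rewrite -/u in entry eq_au; rewrite eq_bv eq_au in lt_b.
  by exfalso; lia.
have neq_xv x : x \notin T v -> x != v by apply: contraNneq => ->; apply: subtree_self.
exists b; rewrite ?bTv; last lia.
by apply: (adjU_deviate _ ab) => _; apply: neq_xv; rewrite ?aTv ?bTv.
Qed.

Lemma cost_rewire_down u y : ~~ periodic f u -> periodic f y -> f y = f u -> y != f u ->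
  cost_sum (deviate f y u) y <=
  \sum_(z : 'I_n) (if z == y then 0 else if z \in T u then (d u z).+1 else (d y z).+1).
Proof.
set r := f u => Npu py fy neq_yr.
have yNTu : y \notin T u by apply: contra Npu => /subtree_periodic; apply.
have neq_uy : u != y by apply: contraTneq py => <-.
have exit_u := sole_exit_subtree Npu.
pose phi z := if z == y then 0 else if z \in T u then (d u z).+1 else (d y z).+1.
apply: (@cost_sum_le_sum _ _ phi) => z; apply: (@distU_le_descent _ _ phi) => a neq_ay.
rewrite /phi (negbTE neq_ay).
have [-> | neq_au] := eqVneq a u.
  by exists y; [apply: adjU_deviate_new | rewrite eqxx; case: ifP].
have neq_xy x : x \in T u -> x != y by apply: contraTneq => ->.
case aTu: (a \in T u).
  have [b ab lt_b] := distU_descent (f_conn u a) neq_au.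
  have bTu : b \in T u.
    apply: contraT => bNTu; have [eq_au _] := exit_u _ _ ab aTu bNTu.
    by rewrite eq_au eqxx in neq_au.
  exists b; last by rewrite (negbTE (neq_xy _ bTu)) bTu.
  by apply: (adjU_deviate _ ab) => _; apply: neq_xy.
have [-> | neq_ar] := eqVneq a r.
  exists u; last by rewrite (negbTE neq_uy) subtree_self distUxx ltnS distU_gt0.
  have ru : adjU f r u by rewrite /adjU eqxx orbT.
  by apply: (adjU_deviate _ ru) => _; rewrite // eq_sym.
have [b ab lt_b] := distU_descent (f_conn y a) neq_ay.
case bTu: (b \in T u).
  rewrite adjU_sym in ab; have [_ eq_ar] := exit_u _ _ ab bTu (negbT aTu).
  by rewrite eq_ar eqxx in neq_ar.
exists b; last by rewrite bTu; case: ifP => _; lia.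
apply: (adjU_deviate _ ab) => [_ // | fba]; apply: contra_neq neq_ar => eq_by.
by rewrite -fba eq_by fy.
Qed.

End Rewiring.

Section DepthOne.
Variables (n : nat) (f : 'I_n -> 'I_n).
Hypotheses (f_valid : valid_profile f) (f_conn : connectedU f) (f_eq : equilibrium_sum f).
Local Notation d := (distU f).
Local Notation T := (subtree f).

Lemma subtree_gt_half v : ~~ periodic f (f v) -> n < (#|T (f v)|).*2.
Proof.
set u := f v; set r := f u => Npu.
have Npv : ~~ periodic f v := contra (@periodic_f _ f v) Npu.
have neq_rv : r != v by apply: contraNneq Npv => frv; apply/periodicP; exists 1.
have uNTv : u \notin T v by rewrite mem_f_subtree.
have rNTu : r \notin T u by rewrite mem_f_subtree.
have vTu : v \in T u := subtree_f (subtree_self f v).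
have exit_v := sole_exit_subtree Npv; have exit_u := sole_exit_subtree Npu.
(* Rewiring v from u to f u brings v one step closer to every vertex outside T u, and
   moves it at most one step away from the vertices of T u outside T v. *)
have lb : \sum_(z : 'I_n) (if z \in T v then d v z else (d u z).+1) <= cost_sum f v.
  apply: sum_le_cost_sum => z; case: ifPn => // zNTv.
  have := distU_exit f_conn exit_v (subtree_self f v) uNTv (subtree_self f v) zNTv.
  by rewrite distUxx.
have ub := cost_rewire_up f_conn Npu.
have pointwise (z : 'I_n) :
    (if z \in T v then d v z else (d r z).+1) + (z \in ~: T u) + (if z == v then 1 else 0)
    <= (if z \in T v then d v z else (d u z).+1) + (z \in T u).
  rewrite in_setC; have [-> | neq_zv] := eqVneq z v.
    by rewrite subtree_self vTu distUxx.
  case zTv: (z \in T v).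
    by have zTu : z \in T u := subtree_f zTv; rewrite zTu /=; lia.
  case zTu: (z \in T u) => /=.
    by have := distU_triangle f_conn r u z; have := distU_f f_conn u; rewrite -/r; lia.
  have := distU_exit f_conn exit_u (subtree_self f u) rNTu (subtree_self f u) (negbT zTu).
  by rewrite distUxx -/r; lia.
have := leq_sum_ord pointwise; rewrite !big_split /= !sum_mem_card sum_delta => sum_le.
have := leq_trans sum_le (leq_add (leq_trans lb (leq_trans (f_eq neq_rv) ub)) (leqnn _)).
rewrite -!addnA leq_add2l addn1 => lt_card.
by rewrite -[X in X < _](card_ord n) -(cardsC (T u)) -addnn ltn_add2l.
Qed.

Lemma subtree_lt_half u : ~~ periodic f u -> periodic f (f u) -> (#|T u|).*2 < n.
Proof.
set r := f u => Npu pr.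
have [y py fy] := periodic_pred pr.
have neq_yr : y != r by rewrite -fy eq_sym; apply: f_valid.
have neq_uy : u != y by apply: contraNneq Npu => ->.
have yNTu : y \notin T u by apply: contra Npu => /subtree_periodic; apply.
have rNTu : r \notin T u by rewrite mem_f_subtree.
have exit_u := sole_exit_subtree Npu.
(* Rewiring y from f u to u brings y one step closer to every vertex of T u, and moves
   it at most one step away from the others. *)
have lb : \sum_(z : 'I_n) (if z \in T u then (d u z).+2 else d y z) <= cost_sum f y.
  apply: sum_le_cost_sum => z; case: ifP => // zTu.
  have := distU_entry f_conn exit_u (subtree_self f u) rNTu yNTu zTu.
  by have := distU_gt0 f_conn neq_yr; rewrite -/r; lia.
have ub := cost_rewire_down f_conn Npu py fy neq_yr.
have pointwise (z : 'I_n) :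
    (if z == y then 0 else if z \in T u then (d u z).+1 else (d y z).+1)
      + (z \in T u) + (if z == y then 1 else 0)
    <= (if z \in T u then (d u z).+2 else d y z) + (z \in ~: T u).
  rewrite in_setC; have [-> | neq_zy] := eqVneq z y.
    by rewrite (negbTE yNTu) distUxx.
  by case: (z \in T u) => /=; lia.
have := leq_sum_ord pointwise; rewrite !big_split /= !sum_mem_card sum_delta => sum_le.
have := leq_trans sum_le (leq_add (leq_trans lb (leq_trans (f_eq neq_uy) ub)) (leqnn _)).
rewrite -!addnA leq_add2l addn1 => lt_card.
by rewrite -[X in _ < X](card_ord n) -(cardsC (T u)) -addnn ltn_add2l.
Qed.

Lemma periodic_f_nonperiodic x : ~~ periodic f x -> periodic f (f x).
Proof.
move=> Npx; apply: contraT => Npfx.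
have [k pk min_k] := ex_minnP (exists_periodic_iter f x).
have k_gt1 : 1 < k.
  by case: k pk {min_k} => [|[|k]] // pk; [rewrite pk in Npx | rewrite pk in Npfx].
set v := iter k.-2 f x.
have fv : f v = iter k.-1 f x by rewrite /v -iterS; congr (iter _ f x); lia.
have ffv : f (f v) = iter k f x by rewrite fv -iterS; congr (iter _ f x); lia.
have Npfv : ~~ periodic f (f v) by rewrite fv; apply/negP => /min_k; lia.
have pffv : periodic f (f (f v)) by rewrite ffv.
by have := subtree_gt_half Npfv; have := subtree_lt_half Npfv pffv; lia.
Qed.

End DepthOne.

(* Distance from vertex 0 to vertex k on the cycle 0 -> 1 -> ... -> L-1 -> 0 once the
   arc 0 -> 1 is replaced by the chord 0 -> 2. *)
Definition chord_dist L k := if k == 0 then 0 else if k == 1 then 2 else minn k.-1 (L - k).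

Lemma chord_dist_le L k : 6 <= L -> k < L ->
  chord_dist L k + (k == 2) + (k == 3) <= minn k (L - k) + (k == 1).
Proof. by rewrite /chord_dist; case: k => [|[|[|[|k]]]] /=; lia. Qed.

Section CycleLength.
Variables (n : nat) (f : 'I_n -> 'I_n).
Hypotheses (f_valid : valid_profile f) (f_conn : connectedU f) (f_eq : equilibrium_sum f).

Definition root x := if periodic f x then x else f x.

Lemma root_periodic x : periodic f (root x).
Proof. by rewrite /root; case: ifPn => // /periodic_f_nonperiodic; apply. Qed.

Definition weight z := #|[set x | root x == z]|.

Lemma weight_gt0 z : periodic f z -> 0 < weight z.
Proof. by move=> pz; apply/card_gt0P; exists z; rewrite inE /root pz. Qed.

Section Potentials.
Variable c : 'I_n.
Hypothesis c_per : periodic f c.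
Local Notation L := (order f c).
Hypothesis L_ge6 : 6 <= L.

Definition idx z := findex f c z.

Lemma idx_lt z : periodic f z -> idx z < L.
Proof. by move=> pz; apply/findex_max/periodic_fconnect. Qed.

Lemma iter_idx z : periodic f z -> iter (idx z) f c = z.
Proof. by move=> pz; apply/iter_findex/periodic_fconnect. Qed.

Lemma idx_iter k : k < L -> idx (iter k f c) = k.
Proof. exact: findex_iter. Qed.

Lemma idx_f z : periodic f z -> idx (f z) = if (idx z).+1 < L then (idx z).+1 else 0.
Proof.
move=> pz; rewrite -{1}(iter_idx pz) -iterS; case: ifP => [|lt_L]; first exact: idx_iter.
have -> : (idx z).+1 = L by have := idx_lt pz; lia.
by rewrite iter_order_periodic // (idx_iter (order_gt0 f c)).
Qed.

Lemma idx_c : idx c = 0.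
Proof. exact: (@idx_iter 0 (order_gt0 f c)). Qed.

(* [pot x] is the distance from [c] to [x]; [pot_chord x] bounds it after [c] rewires
   its arc to [iter 2 f c]. *)
Definition cyc_dist k := minn k (L - k).
Definition pot x := cyc_dist (idx (root x)) + ~~ periodic f x.
Definition pot_chord x := chord_dist L (idx (root x)) + ~~ periodic f x.

Lemma pot_lipschitz a b : adjU f a b -> pot b <= (pot a).+1.
Proof.
have pot_f x : pot x <= (pot (f x)).+1 /\ pot (f x) <= (pot x).+1.
  rewrite /pot /root; case px: (periodic f x) => /=.
    rewrite periodic_f //= idx_f //; have := idx_lt px; rewrite /cyc_dist.
    by case: ifP; move: (idx x) => k; lia.
  by rewrite periodic_f_nonperiodic ?px //=; lia.
by case/orP => /eqP <-; [exact: (pot_f a).2 | exact: (pot_f b).1].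
Qed.

Lemma pot_c : pot c = 0.
Proof. by rewrite /pot /root c_per /= idx_c /cyc_dist min0n. Qed.

Lemma pot_le_cost : \sum_(x : 'I_n) pot x <= cost_sum f c.
Proof.
apply: sum_le_cost_sum => x.
by have := lipschitz_le_distU pot_lipschitz (f_conn c x); rewrite pot_c.
Qed.

Lemma iter2_neq : iter 2 f c != c.
Proof.
apply/eqP => fix2.
by have := @idx_iter 2 (leq_trans (isT : 3 <= 6) L_ge6); rewrite fix2 idx_c.
Qed.

Lemma cost_chord_le :
  cost_sum (deviate f c (iter 2 f c)) c <= \sum_(x : 'I_n) pot_chord x.
Proof.
apply: (@cost_sum_le_sum _ _ pot_chord) => x.
apply: (@distU_le_descent _ _ pot_chord) => a neq_ac.
have adj_f : adjU (deviate f c (iter 2 f c)) a (f a).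
  by rewrite /adjU /deviate (negbTE neq_ac) eqxx.
have [pa | Npa] := boolP (periodic f a); last first.
  exists (f a) => //; rewrite /pot_chord /root (negbTE Npa) periodic_f_nonperiodic //=; lia.
rewrite /pot_chord /root pa /= addn0.
have := iter_idx pa; have := idx_lt pa.
case E: (idx a) => [|[|[|k]]] lt_L iter_a.
- by rewrite -iter_a eqxx in neq_ac.
- exists (f a) => //; rewrite periodic_f // -iter_a -iterS idx_iter /chord_dist //=; lia.
- exists c; first by apply/orP; right; rewrite /deviate eqxx; apply/eqP.
  by rewrite c_per idx_c /chord_dist /=; lia.
case: (leqP k.+2 (L - k.+3)) => le_k.
  have neq_bc : iter k.+2 f c != c.
    by apply/eqP => fix_b; have := @idx_iter k.+2 (ltnW lt_L); rewrite fix_b idx_c.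
  exists (iter k.+2 f c).
    by rewrite /adjU /deviate (negbTE neq_bc) -iterS iter_a eqxx orbT.
  by rewrite periodic_iter // idx_iter /chord_dist /=; lia.
exists (f a) => //; rewrite periodic_f // idx_f // E /chord_dist.
by case: (ltnP k.+4 L) => /= lt_k; lia.
Qed.

Definition level k := [set x | idx (root x) == k].

Lemma card_level k : k < L -> #|level k| = weight (iter k f c).
Proof.
move=> lt_kL; apply: eq_card => x; rewrite !inE.
apply/eqP/eqP => [<-|->]; first by rewrite iter_idx ?root_periodic.
exact: idx_iter.
Qed.

Lemma weight_drop : weight (iter 2 f c) + weight (iter 3 f c) <= weight (iter 1 f c).
Proof.
have pointwise (x : 'I_n) :
    pot_chord x + (x \in level 2) + (x \in level 3) <= pot x + (x \in level 1).
  rewrite /pot_chord /pot !inE; have := chord_dist_le L_ge6 (idx_lt (root_periodic x)).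
  by rewrite /cyc_dist; lia.
have chain : \sum_(x : 'I_n) pot x <= \sum_(x : 'I_n) pot_chord x.
  exact: leq_trans pot_le_cost (leq_trans (f_eq iter2_neq) cost_chord_le).
have sum_le := leq_sum_ord pointwise.
rewrite !big_split /= in chain.
rewrite !big_split /= !sum_mem_card !card_level ?(leq_trans _ L_ge6) // in sum_le.
lia.
Qed.

End Potentials.

Lemma cycle_length_le5 c : periodic f c -> order f c <= 5.
Proof.
move=> pc; rewrite leqNgt; apply/negP => L_ge6.
have drop k : weight (iter k.+2 f c) < weight (iter k.+1 f c).
  have := @weight_drop (iter k f c) (periodic_iter k pc).
  rewrite order_iter_periodic // -!iterD !addSn add0n => /(_ L_ge6).
  by have := weight_gt0 (periodic_iter k.+3 pc); lia.
have shrink m : weight (iter m.+1 f c) + m <= weight (iter 1 f c).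
  by elim: m => [|m IH]; [rewrite addn0 | have := drop m; lia].
by have := shrink (order f c); rewrite iterS iter_order_periodic //=; lia.
Qed.

End CycleLength.

Theorem mainTheorem6 (n : nat) (f : 'I_n -> 'I_n) :
  2 <= n -> valid_profile f -> equilibrium_sum f ->
  connectedU f /\
  exists C : {set 'I_n},
    [/\ is_cycle f C,
        (forall C' : {set 'I_n}, is_cycle f C' -> C' = C),
        #|cverts f C| <= 5 &
        (forall v : 'I_n, v \in cverts f C \/
                          exists2 w, w \in cverts f C & adjU f v w)].
Proof.
move=> n_ge2 f_valid f_eq; have f_conn := equilibrium_connected f_eq.
have n_gt0 : 0 < n by apply: ltnW.
split => //; exists (periodic_set f); split.
- exact: periodic_set_cycle.
- by move=> C /(is_cycle_periodic_set f_conn).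
- have [k pk] := exists_periodic_iter f (Ordinal n_gt0).
  rewrite cverts_periodic_set (card_periodic_set f_conn pk).
  exact: cycle_length_le5 pk.
- move=> v; rewrite cverts_periodic_set !inE.
  have [pv | Npv] := boolP (periodic f v); [left | right] => //.
  by exists (f v); [rewrite inE periodic_f_nonperiodic | rewrite /adjU eqxx].
Qed.
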